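(* Let $d,m,e$ be parameters with $m$ a prime power and $d,e\le m$, let $n=dm$, $p=n^{-0.1}$ and $t=n/p=n^{1.1}$ (assumed an integer). Let $P$ be the random polynomial obtained from $\mathsf{NW\circ Lin}_{d,m,e}$ by independently setting each variable $x_{i,j,h}$ ($i\in[d], j\in[m], h\in[t]$) to zero with probability $1-p$. Then with probability at least $1-o(1)$ (as $n\to\infty$), $\mathsf{NW}_{d,m,e}$ is a projection of $P$, i.e. it is obtained from $P$ by setting some further variables to zero and renaming the remaining variables.
   Context: Identify $[m]$ with $\mathbb{F}_m$. $\mathsf{NW}_{d,m,e}(\{x_{i,j}\})=\sum_{q\in\mathbb{F}_m[u],\ \deg q<e} x_{1,q(1)}\cdots x_{d,q(d)}$. The polynomial $\mathsf{NW\circ Lin}_{d,m,e}$ in variables $\{x_{i,j,h}: i\in[d], j\in[m], h\in[t]\}$ is obtained from $\mathsf{NW}_{d,m,e}$ by substituting $x_{i,j}\mapsto \sum_{h=1}^{t} x_{i,j,h}$ for every $i\in[d], j\in[m]$. *)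

From HB Require Import structures.
From mathcomp Require Import all_boot all_order all_algebra all_field.
From mathcomp Require Import mpoly.
From mathcomp Require Import reals.
Set Implicit Arguments. Unset Strict Implicit. Unset Printing Implicit Defensive.
Import Order.TTheory GRing.Theory Num.Theory.
Local Open Scope ring_scope.

Notation polyV F T := {mpoly F[#|T|]}.

Definition varX (F : fieldType) (T : finType) (v : T) : polyV F T :=
  'X_(enum_rank v).

Definition substV (F : fieldType) (T U : finType) (s : T -> polyV F U)
  (P : polyV F T) : polyV F U :=
  P \mPo [tuple s (enum_val i) | i < #|T|].

Definition NWvar (K : finFieldType) (d : nat) : finType := ('I_d * K)%type.
Definition NWLvar (K : finFieldType) (d t : nat) : finType := ('I_d * K * 'I_t)%type.

(* The polynomials q of degree < e are exactly
   Poly c for c an e-tuple of coefficients (bijectively).  The points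
   1,...,d of [m] are identified with elements a 1, ..., a d of F_m via an
   injective map a (the identification [m] = F_m). *)
Definition NW (F : fieldType) (K : finFieldType) (d e : nat) (a : 'I_d -> K)
  : polyV F (NWvar K d) :=
  \sum_(c : e.-tuple K) \prod_(i < d) varX F ((i, (Poly c).[a i]) : NWvar K d).

Definition NWLin (F : fieldType) (K : finFieldType) (d e t : nat)
  (a : 'I_d -> K) : polyV F (NWLvar K d t) :=
  substV (fun v : NWvar K d =>
            \sum_(h < t) varX F ((v.1, v.2, h) : NWLvar K d t))
         (NW F e a).

Definition restrict (F : fieldType) (T : finType) (rho : {ffun T -> bool})
  (P : polyV F T) : polyV F T :=
  substV (fun w : T => if rho w then varX F w else 0) P.

Definition is_projection (F : fieldType) (V W : finType)
  (Q : polyV F V) (P : polyV F W) : Prop :=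
  exists sigma : W -> option V,
    (forall w w' v, sigma w = Some v -> sigma w' = Some v -> w = w') /\
    substV (fun w => match sigma w with Some v => varX F v | None => 0 end) P
      = Q.

Definition restr_weight (R : realType) (T : finType) (p : R)
  (rho : {ffun T -> bool}) : R :=
  \prod_(w : T) (if rho w then p else 1 - p).

From HB Require Import structures.
From mathcomp Require Import all_boot all_order all_algebra all_field.
From mathcomp Require Import mpoly.
From mathcomp Require Import reals.
From mathcomp Require Import ring lra.
Import Order.TTheory GRing.Theory Num.Theory.
Local Open Scope ring_scope.

(* NW o Lin arises from NW by replacing each variable x_{i,j} by the sum of
   its t copies x_{i,j,h}.  If every (i,j) keeps at least one copy under the
   restriction, zeroing the other copies and renaming the survivor back to
   x_{i,j} recovers NW (for any polynomial in place of NW).  By the union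
   bound some (i,j) loses all its copies with probability at most n (1-p)^t,
   and as (1-p)^t (1+p)^t <= 1 while the binomial expansion gives
   2 (1+p)^t >= n(n-1) when tp = n, this is at most 2/(n-1). *)

Section Substitution.
Variable F : fieldType.

Lemma substV_comp (T U V : finType) (s1 : T -> polyV F U)
    (s2 : U -> polyV F V) (P : polyV F T) :
  substV s2 (substV s1 P) = substV (fun v => substV s2 (s1 v)) P.
Proof.
rewrite /substV [P \mPo _]comp_mpolyE raddf_sum [in RHS]comp_mpolyE.
apply: eq_bigr => m _ /=; rewrite linearZ /= rmorph_prod; congr (_ *: _).
by apply: eq_bigr => i _; rewrite rmorphXn !tnth_map.
Qed.

Lemma substV_id (T : finType) (P : polyV F T) : substV (@varX F T) P = P.
Proof.
rewrite /substV -[RHS]comp_mpoly_id; congr comp_mpoly.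
by apply: eq_from_tnth => i; rewrite !tnth_map /varX enum_valK tnth_ord_tuple.
Qed.

Lemma eq_substV (T U : finType) (s s' : T -> polyV F U) (P : polyV F T) :
  s =1 s' -> substV s P = substV s' P.
Proof.
move=> eq_s; rewrite /substV; congr comp_mpoly.
by apply: eq_from_tnth => i; rewrite !tnth_map eq_s.
Qed.

Lemma substV_varX (T U : finType) (s : T -> polyV F U) (v : T) :
  substV s (varX F v) = s v.
Proof.
by rewrite /substV /varX comp_mpolyXU -tnth_nth tnth_map tnth_ord_tuple enum_rankK.
Qed.

Lemma substV0 (T U : finType) (s : T -> polyV F U) : substV s 0 = 0.
Proof. exact: comp_mpoly0. Qed.

Lemma substV_sum (T U : finType) (s : T -> polyV F U) (I : Type) (r : seq I)
    (P : pred I) (G : I -> polyV F T) :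
  substV s (\sum_(i <- r | P i) G i) = \sum_(i <- r | P i) substV s (G i).
Proof. exact: raddf_sum. Qed.

Definition sum_copies (T H : finType) (v : T) : polyV F (T * H : finType)%type :=
  \sum_(h : H) varX F (v, h).

Lemma is_projection_restrict_copies (T H : finType) (P : polyV F T)
    (rho : {ffun (T * H)%type -> bool}) :
  (forall x, exists h, rho (x, h)) ->
  is_projection P (restrict rho (substV (@sum_copies T H) P)).
Proof.
move=> survives; pose h0 x := xchoose (survives x).
have rho_h0 x : rho (x, h0 x) by exact: (xchooseP (survives x)).
exists (fun w : (T * H)%type => if w.2 == h0 w.1 then Some w.1 else None); split.
  case=> [x h] [x' h'] v /=.
  by case: eqP => // -> [<-]; case: eqP => // -> [<-].
rewrite /restrict !substV_comp -[RHS]substV_id; apply: eq_substV => x.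
rewrite substV_sum (bigD1 (h0 x)) //= big1 ?addr0.
  by rewrite !substV_varX rho_h0 substV_varX /= eqxx.
move=> h /negbTE h_ne; rewrite !substV_varX.
by case: (rho _); rewrite ?substV0 // substV_varX /= h_ne.
Qed.

End Substitution.

Section Restriction.
Context {R : realType} (p : R).

Lemma sum_prod_ffun (T : finType) (g : T -> bool -> R) :
  \sum_(rho : {ffun T -> bool}) \prod_w g w (rho w)
  = \prod_w (g w true + g w false).
Proof.
rewrite (eq_bigr (fun w => \sum_(b : bool) g w b)) => [|w _]; last first.
  by rewrite big_bool.
by rewrite bigA_distr_bigA.
Qed.

Lemma sum_restr_weight (T : finType) :
  \sum_(rho : {ffun T -> bool}) restr_weight p rho = 1.
Proof.
rewrite /restr_weight (@sum_prod_ffun T (fun _ (b : bool) => if b then p else 1 - p)).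
by apply: big1 => w _; rewrite addrC subrK.
Qed.

Lemma restr_weight_ge0 (T : finType) (rho : {ffun T -> bool}) :
  0 <= p <= 1 -> 0 <= restr_weight p rho.
Proof.
by case/andP=> p_ge0 p_le1; apply: prodr_ge0 => w _; case: (rho w); rewrite ?subr_ge0.
Qed.

Variables T H : finType.

Lemma weight_all_copies_dead (x : T) :
  \sum_(rho : {ffun (T * H)%type -> bool})
     (if [forall h, ~~ rho (x, h)] then restr_weight p rho else 0)
  = (1 - p) ^+ #|H|.
Proof.
pose g (w : (T * H)%type) (b : bool) :=
  if (w.1 == x) && b then 0 else if b then p else 1 - p.
transitivity (\sum_(rho : {ffun (T * H)%type -> bool}) \prod_w g w (rho w)).
  apply: eq_bigr => rho _; rewrite /restr_weight.
  case: ifP => [/forallP dead | /negbT /forallPn [h /negPn alive]].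
    apply: eq_bigr => -[y h] _; rewrite /g /=.
    by case: eqP => //= ->; move: (dead h); case: (rho _).
  by rewrite (bigD1 (x, h)) //= /g /= eqxx alive mul0r.
rewrite sum_prod_ffun.
transitivity (\prod_(y : T) \prod_(h : H) (if y == x then 1 - p else 1)).
  rewrite pair_big; apply: eq_bigr => -[y h] _; rewrite /g /=.
  by case: (y == x); rewrite ?add0r // addrC subrK.
rewrite (bigD1 x) //= [X in _ * X]big1 ?mulr1.
  by rewrite eqxx prodr_const.
by move=> y /negbTE ->; rewrite big1.
Qed.

Lemma weight_some_copy_survives : 0 <= p <= 1 ->
  1 - #|T|%:R * (1 - p) ^+ #|H| <=
  \sum_(rho in [set rho : {ffun (T * H)%type -> bool}
                  | [forall x, [exists h, rho (x, h)]]]) restr_weight p rho.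
Proof.
move=> p01; set S := [set rho | _].
have := sum_restr_weight (T * H)%type; rewrite (bigID (mem S)) /= => total.
suff : \sum_(rho | rho \notin S) restr_weight p rho <= #|T|%:R * (1 - p) ^+ #|H|.
  by lra.
pose dead (rho : {ffun (T * H)%type -> bool}) (x : T) :=
  if [forall h, ~~ rho (x, h)] then restr_weight p rho else 0.
have dead_ge0 rho x : 0 <= dead rho x.
  by rewrite /dead; case: ifP => // _; exact: restr_weight_ge0.
apply: (@le_trans _ _ (\sum_rho \sum_x dead rho x)); last first.
  rewrite exchange_big /=; under eq_bigr do rewrite weight_all_copies_dead.
  by rewrite sumr_const mulr_natl.
rewrite [X in _ <= X](bigID (fun rho => rho \notin S)) /= -[X in X <= _]addr0.
apply: lerD; last by apply: sumr_ge0 => rho _; apply: sumr_ge0 => x _.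
apply: ler_sum => rho; rewrite inE negb_forall => /existsP [x].
rewrite negb_exists => all_dead; rewrite (bigD1 x) //= {1}/dead all_dead lerDl.
by apply: sumr_ge0 => y _; exact: dead_ge0.
Qed.

End Restriction.

Section Estimate.
Context {R : realType}.

(* The first three terms of the binomial expansion of (1 + x)^k, doubled. *)
Lemma exp1D_ge_quadratic (x : R) (k : nat) : 0 <= x ->
  2 + 2 * k%:R * x + k%:R * (k%:R - 1) * x ^+ 2 <= 2 * (1 + x) ^+ k.
Proof.
move=> x_ge0; elim: k => [|k IH]; first by rewrite expr0 !(mulr0, mul0r, addr0, mulr1).
have c_ge0 : 0 <= k%:R * (k%:R - 1) :> R.
  by case: k {IH} => [|k]; rewrite ?mul0r // mulr_ge0 // -natr1 addrK.
have step : (1 + x) * (2 + 2 * k%:R * x + k%:R * (k%:R - 1) * x ^+ 2)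
    <= 2 * (1 + x) ^+ k.+1.
  by rewrite [_ ^+ k.+1]exprS [X in _ <= X]mulrCA ler_wpM2l // addr_ge0.
apply: le_trans step; rewrite -subr_ge0.
have -> : (1 + x) * (2 + 2 * k%:R * x + k%:R * (k%:R - 1) * x ^+ 2)
    - (2 + 2 * k.+1%:R * x + k.+1%:R * (k.+1%:R - 1) * x ^+ 2)
    = k%:R * (k%:R - 1) * x ^+ 3 by ring.
by rewrite mulr_ge0 // exprn_ge0.
Qed.

Lemma mul_pred_exp1B_le2 (p : R) (t : nat) (n : R) :
  0 < p <= 1 -> t%:R * p = n -> n * (n - 1) * (1 - p) ^+ t <= 2.
Proof.
case/andP=> p_gt0 p_le1 tp.
have A_ge0 : 0 <= (1 - p) ^+ t by rewrite exprn_ge0 // subr_ge0.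
have AB_le1 : (1 - p) ^+ t * (1 + p) ^+ t <= 1.
  rewrite -exprMn exprn_ile1 //; nra.
have B_ge : n * (n - 1) <= 2 * (1 + p) ^+ t.
  apply: le_trans (exp1D_ge_quadratic p t (ltW p_gt0)).
  have n_ge0 : 0 <= n by rewrite -tp mulr_ge0 // ltW.
  have -> : 2 + 2 * t%:R * p + t%:R * (t%:R - 1) * p ^+ 2
      = 2 + 2 * (t%:R * p) + (t%:R * p) * (t%:R * p) - (t%:R * p) * p by ring.
  rewrite tp; nra.
nra.
Qed.

Lemma lt_two_mul_predn (eps : R) (n : nat) : 0 < eps ->
  ((Num.truncn (2 / eps)).+2 <= n)%N -> 2 < eps * (n%:R - 1).
Proof.
move=> eps_gt0 n_ge; have := truncnS_gt (2 / eps).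
have : (Num.truncn (2 / eps)).+1%:R + 1 <= n%:R :> R by rewrite natr1 ler_nat.
move=> h1 h2; have : 2 / eps < n%:R - 1 by lra.
by rewrite -(ltr_pM2r eps_gt0) divfK ?gt_eqF // mulrC.
Qed.

End Estimate.

Theorem lemma7p2 (F : fieldType) (R : realType) (eps : R) :
  0 < eps ->
  exists N : nat,
  forall (K : finFieldType) (d m e t : nat) (a : 'I_d -> K) (p : R),
    #|K| = m -> injective a -> (d <= m)%N -> (e <= m)%N ->
    (N <= d * m)%N ->
    0 < p -> p ^+ 10 = ((d * m)%:R)^-1 ->
    t%:R = (d * m)%:R / p ->
    exists S : {set {ffun NWLvar K d t -> bool}},
      (forall rho, rho \in S ->
         is_projection (NW F e a) (restrict rho (NWLin F e t a))) /\
      1 - eps <= \sum_(rho in S) restr_weight p rho.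
Proof.
move=> eps_gt0; exists (Num.truncn (2 / eps)).+2.
move=> K d m e t a p Km _ _ _ n_ge p_gt0 p10 t_def.
exists [set rho : {ffun NWLvar K d t -> bool} | [forall x, [exists h, rho (x, h)]]].
split=> [rho | ].
  rewrite inE => /forallP survives.
  have -> : NWLin F e t a = substV (@sum_copies F (NWvar K d) 'I_t) (NW F e a).
    by apply: eq_substV => -[i j].
  by apply: is_projection_restrict_copies => x; apply/existsP; exact: survives.
set n := (d * m)%:R : R.
have n_gt1 : 1 < n by rewrite ltr1n; apply: leq_trans n_ge.
have p_le1 : p <= 1.
  rewrite -(@expr_le1 R 10 p isT (ltW p_gt0)) p10 invf_le1 ?(ltW n_gt1) //.
  exact: lt_trans ltr01 n_gt1.
have tp : t%:R * p = n by rewrite t_def divfK // gt_eqF.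
have dead_le : n * (n - 1) * (1 - p) ^+ t <= 2.
  by apply: mul_pred_exp1B_le2 tp; rewrite p_gt0.
have eps_n : 2 < eps * (n - 1) by exact: lt_two_mul_predn.
have survive := weight_some_copy_survives p (NWvar K d) 'I_t.
rewrite card_prod !card_ord Km (ltW p_gt0) p_le1 in survive.
apply: le_trans (survive isT); rewrite lerD2l lerN2.
have n1_gt0 : 0 < n - 1 by rewrite subr_gt0.
rewrite -(ler_pM2r n1_gt0) mulrAC; apply: le_trans dead_le _.
exact: ltW.
Qed.
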